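(* For all $x$ with $|x|<1/4$, \[ \sum_{n=0}^\infty\binom{4n}{2n}O_{2n}x^{2n}=-\frac{\sqrt{1+4x}\,\ln(1-4x)+\sqrt{1-4x}\,\ln(1+4x)}{4\sqrt{1-16x^2}} \] and \[ \sum_{n=0}^\infty\binom{4n+2}{2n+1}O_{2n+1}x^{2n+1}=-\frac{\sqrt{1+4x}\,\ln(1-4x)-\sqrt{1-4x}\,\ln(1+4x)}{4\sqrt{1-16x^2}}. \]
   Context: $O_n=\sum_{j=1}^n\frac1{2j-1}$ is the $n$th odd harmonic number ($O_0=0$). *)

From Stdlib Require Import Reals.
From Coquelicot Require Import Coquelicot.
Open Scope R_scope.

Fixpoint oddH (n : nat) : R :=
  match n with
  | O => 0
  | S m => oddH m + / (2 * INR (S m) - 1)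
  end.

Definition binomR (n k : nat) : R := Binomial.C n k.

From Stdlib Require Import Reals Lra Lia.
From Coquelicot Require Import Coquelicot.
Open Scope R_scope.

(* Write b_m = C(2m,m) and a_m = b_m O_m.  The recurrences
   (m+1) b_(m+1) = (4m+2) b_m  and  (m+1) a_(m+1) = (4m+2) a_m + 2 b_m
   become the differential equations (1-4x) B' = 2B and (1-4x) A' = 2A + 2B for
   the generating functions, which converge for |x| < 1/4.  Hence B sqrt(1-4x)
   and A sqrt(1-4x) + ln(1-4x)/2 are constant, so B = 1/sqrt(1-4x) and
   A = -ln(1-4x)/(2 sqrt(1-4x)).  The two series of the theorem are the even and
   odd parts (A(x) +- A(-x))/2. *)

Definition central_binom (m : nat) : R := binomR (2 * m) m.

Definition central_oddH (m : nat) : R := central_binom m * oddH m.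

Definition central_oddH_gf (x : R) : R := - ln (1 - 4 * x) / (2 * sqrt (1 - 4 * x)).

Lemma INR_fact_gt0 (n : nat) : 0 < INR (Factorial.fact n).
Proof. apply lt_0_INR, Factorial.lt_O_fact. Qed.

Lemma central_binom_0 : central_binom 0 = 1.
Proof. unfold central_binom, binomR, Binomial.C; simpl; field. Qed.

Lemma central_binom_gt0 (m : nat) : 0 < central_binom m.
Proof.
  unfold central_binom, binomR, Binomial.C.
  apply Rdiv_lt_0_compat; [|apply Rmult_lt_0_compat]; apply INR_fact_gt0.
Qed.

Lemma central_binom_rec (m : nat) :
  INR (S m) * central_binom (S m) = (4 * INR m + 2) * central_binom m.
Proof.
  unfold central_binom, binomR, Binomial.C.
  replace (2 * S m - S m)%nat with (S m) by lia.
  replace (2 * m - m)%nat with m by lia.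
  replace (2 * S m)%nat with (S (S (2 * m))) by lia.
  rewrite !Rfunctions.fact_simpl, !mult_INR, !S_INR, mult_INR.
  pose proof (INR_fact_gt0 m); pose proof (INR_fact_gt0 (2 * m)); pose proof (pos_INR m).
  simpl (INR 2). field. lra.
Qed.

Lemma central_binom_S (m : nat) :
  central_binom (S m) = (4 * INR m + 2) / (INR m + 1) * central_binom m.
Proof.
  pose proof (pos_INR m).
  apply (Rmult_eq_reg_l (INR (S m))); [|rewrite S_INR; lra].
  rewrite central_binom_rec, S_INR. field. lra.
Qed.

Lemma central_binom_le_S (m : nat) : central_binom m <= central_binom (S m).
Proof.
  rewrite central_binom_S. pose proof (pos_INR m). pose proof (central_binom_gt0 m).
  assert (1 <= (4 * INR m + 2) / (INR m + 1)) by (apply Rcomplements.Rle_div_r; lra).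
  nra.
Qed.

Lemma oddH_ge0 (m : nat) : 0 <= oddH m.
Proof.
  induction m as [|m IH]; cbn [oddH]; [lra|].
  rewrite S_INR. pose proof (pos_INR m).
  assert (0 < / (2 * (INR m + 1) - 1)) by (apply Rinv_0_lt_compat; lra). lra.
Qed.

Lemma oddH_le_INR (m : nat) : oddH m <= INR m.
Proof.
  induction m as [|m IH]; cbn [oddH]; [simpl; lra|].
  rewrite S_INR. pose proof (pos_INR m).
  assert (/ (2 * (INR m + 1) - 1) <= 1) by (rewrite <- Rinv_1; apply Rinv_le_contravar; lra).
  lra.
Qed.

Lemma central_oddH_0 : central_oddH 0 = 0.
Proof. unfold central_oddH; simpl; ring. Qed.

Lemma central_oddH_rec (m : nat) :
  INR (S m) * central_oddH (S m)
  = (4 * INR m + 2) * central_oddH m + 2 * central_binom m.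
Proof.
  unfold central_oddH. cbn [oddH]. rewrite central_binom_S, S_INR.
  pose proof (pos_INR m). field. lra.
Qed.

Lemma CV_radius_le_Rabs (a b : nat -> R) :
  (forall n, Rabs (a n) <= Rabs (b n)) -> Rbar_le (CV_radius b) (CV_radius a).
Proof.
  intros Hab. destruct (CV_radius_bounded b) as [_ Hb]. apply Hb.
  intros r [M HM]. destruct (CV_radius_bounded a) as [Ha _]. apply Ha.
  exists M. intros n. eapply Rle_trans; [|apply (HM n)]. rewrite !Rabs_mult.
  apply Rmult_le_compat_r; [apply Rabs_pos | apply Hab].
Qed.

Lemma is_lim_seq_inv_S : is_lim_seq (fun n => / INR (S n)) 0.
Proof.
  apply (is_lim_seq_inv (fun n => INR (S n)) p_infty); [|discriminate].
  apply (is_lim_seq_incr_1 INR), is_lim_seq_INR.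
Qed.

Lemma CV_radius_central_binom : CV_radius central_binom = / 4.
Proof.
  apply CV_radius_finite_DAlembert; [intros n; pose proof (central_binom_gt0 n); lra | lra |].
  apply (is_lim_seq_ext (fun n => 4 - 2 * / INR (S n))).
  - intros n. pose proof (central_binom_gt0 n). pose proof (pos_INR n).
    rewrite central_binom_S, S_INR, Rabs_pos_eq.
    + field. split; lra.
    + apply Rdiv_le_0_compat; [|lra]. apply Rmult_le_pos; [|lra].
      apply Rdiv_le_0_compat; lra.
  - assert (H : is_lim_seq (fun n => 4 - 2 * / INR (S n)) (4 - 2 * 0)).
    { apply is_lim_seq_minus'; [apply is_lim_seq_const|].
      apply (is_lim_seq_scal_l _ 2 0), is_lim_seq_inv_S. }
    now rewrite Rmult_0_r, Rminus_0_r in H.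
Qed.

(* [O_m <= m] and monotonicity of [C(2m,m)] give [a_m <= (m+1) b_(m+1)], a
   coefficient of the derivative of [b]. *)
Lemma CV_radius_central_oddH : Rbar_le (/ 4) (CV_radius central_oddH).
Proof.
  rewrite <- CV_radius_central_binom, <- (CV_radius_derive central_binom).
  apply CV_radius_le_Rabs. intros n. unfold central_oddH, PS_derive.
  pose proof (central_binom_gt0 n). pose proof (central_binom_le_S n).
  pose proof (oddH_ge0 n). pose proof (oddH_le_INR n). pose proof (pos_INR n).
  assert (central_binom n * oddH n <= central_binom (S n) * INR n).
  { apply Rle_trans with (central_binom n * INR n);
      [apply Rmult_le_compat_l | apply Rmult_le_compat_r]; lra. }
  rewrite S_INR, !Rabs_pos_eq; nra.
Qed.

Lemma Rabs_lt_CV_radius_central_binom (x : R) :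
  Rabs x < / 4 -> Rbar_lt (Rabs x) (CV_radius central_binom).
Proof. now rewrite CV_radius_central_binom. Qed.

Lemma Rabs_lt_CV_radius_central_oddH (x : R) :
  Rabs x < / 4 -> Rbar_lt (Rabs x) (CV_radius central_oddH).
Proof. intros Hx. eapply Rbar_lt_le_trans; [|apply CV_radius_central_oddH]; exact Hx. Qed.

Lemma PSeries_derive_mul_1_minus (c : nat -> R) (k x : R) :
  Rbar_lt (Rabs x) (CV_radius c) ->
  (1 - k * x) * PSeries (PS_derive c) x
  = PSeries (fun n => PS_derive c n - k * PS_incr_1 (PS_derive c) n) x.
Proof.
  intros Hx. assert (Hd : ex_pseries (PS_derive c) x) by now apply ex_pseries_derive.
  replace ((1 - k * x) * PSeries (PS_derive c) x)
    with (PSeries (PS_derive c) x + (- k) * (x * PSeries (PS_derive c) x)) by ring.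
  rewrite <- PSeries_incr_1, <- PSeries_scal, <- PSeries_plus.
  - apply PSeries_ext. intros n. unfold PS_plus, PS_scal, plus, scal; simpl.
    unfold mult; simpl. ring.
  - exact Hd.
  - apply ex_pseries_scal; [apply Rmult_comm|]. now apply ex_pseries_incr_1.
Qed.

Lemma is_derive_PSeries_mul_sqrt (c : nat -> R) (t : R) :
  Rbar_lt (Rabs t) (CV_radius c) -> 0 < 1 - 4 * t ->
  is_derive (fun u => PSeries c u * sqrt (1 - 4 * u)) t
    (((1 - 4 * t) * PSeries (PS_derive c) t - 2 * PSeries c t) / sqrt (1 - 4 * t)).
Proof.
  intros Hc Ht. auto_derive.
  - split; [now apply ex_derive_PSeries|]. split; [lra | exact I].
  - rewrite Derive_PSeries by exact Hc.
    replace (1 + - (4 * t)) with (1 - 4 * t) by ring.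
    assert (Hs : 0 < sqrt (1 - 4 * t)) by now apply sqrt_lt_R0.
    pose proof (sqrt_sqrt (1 - 4 * t) (Rlt_le _ _ Ht)) as Hss.
    set (s := sqrt (1 - 4 * t)) in *. rewrite <- Hss. field. lra.
Qed.

Lemma eq_0_of_is_derive_0 (f : R -> R) (r x : R) :
  Rabs x < r -> (forall t, Rabs t < r -> is_derive f t 0) -> f x = f 0.
Proof.
  intros Hx Hd. destruct (Rabs_def2 _ _ Hx) as [Hx1 Hx2].
  destruct (Rtotal_order x 0) as [Hneg|[->|Hpos]]; [| reflexivity |].
  - apply eq_is_derive; [|exact Hneg]. intros t Ht. apply Hd, Rabs_def1; lra.
  - symmetry. apply eq_is_derive; [|exact Hpos]. intros t Ht. apply Hd, Rabs_def1; lra.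
Qed.

Lemma central_binom_derive_rec (n : nat) :
  PS_derive central_binom n - 4 * PS_incr_1 (PS_derive central_binom) n = 2 * central_binom n.
Proof.
  unfold PS_derive. destruct n as [|m]; cbn [PS_incr_1]; rewrite central_binom_rec.
  - unfold zero; simpl; ring.
  - ring.
Qed.

Lemma central_oddH_derive_rec (n : nat) :
  PS_derive central_oddH n - 4 * PS_incr_1 (PS_derive central_oddH) n
  = 2 * central_oddH n + 2 * central_binom n.
Proof.
  unfold PS_derive. destruct n as [|m]; cbn [PS_incr_1]; rewrite central_oddH_rec.
  - unfold zero; simpl; ring.
  - ring.
Qed.

Lemma PSeries_central_binom (x : R) :
  Rabs x < / 4 -> PSeries central_binom x = / sqrt (1 - 4 * x).
Proof.
  intros Hx.
  assert (Hconst : PSeries central_binom x * sqrt (1 - 4 * x) = 1).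
  { rewrite (eq_0_of_is_derive_0
      (fun u => PSeries central_binom u * sqrt (1 - 4 * u)) (/ 4) x Hx).
    - rewrite PSeries_0, central_binom_0, Rmult_0_r, Rminus_0_r, sqrt_1. ring.
    - intros t Ht. destruct (Rabs_def2 _ _ Ht).
      pose proof (Rabs_lt_CV_radius_central_binom t Ht) as Hc.
      replace 0 with (((1 - 4 * t) * PSeries (PS_derive central_binom) t
                       - 2 * PSeries central_binom t) / sqrt (1 - 4 * t)).
      + apply is_derive_PSeries_mul_sqrt; [exact Hc | lra].
      + rewrite (PSeries_derive_mul_1_minus _ _ _ Hc).
        rewrite (PSeries_ext _ _ _ central_binom_derive_rec), (PSeries_scal 2 central_binom).
        field.
        apply Rgt_not_eq, sqrt_lt_R0. lra. }
  destruct (Rabs_def2 _ _ Hx).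
  assert (0 < sqrt (1 - 4 * x)) by (apply sqrt_lt_R0; lra).
  apply (Rmult_eq_reg_r (sqrt (1 - 4 * x))); [|lra]. rewrite Hconst. field. lra.
Qed.

Lemma PSeries_central_oddH (x : R) :
  Rabs x < / 4 -> PSeries central_oddH x = central_oddH_gf x.
Proof.
  intros Hx.
  assert (Hconst : PSeries central_oddH x * sqrt (1 - 4 * x) + ln (1 - 4 * x) / 2 = 0).
  { rewrite (eq_0_of_is_derive_0
      (fun u => PSeries central_oddH u * sqrt (1 - 4 * u) + ln (1 - 4 * u) / 2) (/ 4) x Hx).
    - rewrite PSeries_0, central_oddH_0, Rmult_0_r, Rminus_0_r, ln_1. field.
    - intros t Ht. destruct (Rabs_def2 _ _ Ht).
      pose proof (Rabs_lt_CV_radius_central_oddH t Ht) as Hc.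
      assert (Hs : 0 < sqrt (1 - 4 * t)) by (apply sqrt_lt_R0; lra).
      replace 0 with (((1 - 4 * t) * PSeries (PS_derive central_oddH) t
                       - 2 * PSeries central_oddH t) / sqrt (1 - 4 * t)
                      + (- 4 / (1 - 4 * t)) / 2).
      + apply (is_derive_plus (fun u => PSeries central_oddH u * sqrt (1 - 4 * u))).
        * apply is_derive_PSeries_mul_sqrt; [exact Hc | lra].
        * auto_derive; [lra | field; lra].
      + rewrite (PSeries_derive_mul_1_minus _ _ _ Hc).
        rewrite (PSeries_ext _ _ _ central_oddH_derive_rec).
        rewrite (PSeries_plus (PS_scal 2 central_oddH) (PS_scal 2 central_binom)),
          !PSeries_scal, (PSeries_central_binom t Ht).
        * pose proof (sqrt_sqrt (1 - 4 * t) ltac:(lra)) as Hss.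
          set (s := sqrt (1 - 4 * t)) in *. rewrite <- Hss. field. lra.
        * apply ex_pseries_scal; [apply Rmult_comm|].
          now apply CV_radius_inside.
        * apply ex_pseries_scal; [apply Rmult_comm|].
          now apply CV_radius_inside, Rabs_lt_CV_radius_central_binom. }
  destruct (Rabs_def2 _ _ Hx).
  assert (0 < sqrt (1 - 4 * x)) by (apply sqrt_lt_R0; lra).
  apply (Rmult_eq_reg_r (sqrt (1 - 4 * x))); [|lra].
  replace (PSeries central_oddH x * sqrt (1 - 4 * x)) with (- (ln (1 - 4 * x) / 2)) by lra.
  unfold central_oddH_gf. field. lra.
Qed.

Lemma sum_n_pairs (c : nat -> R) (N : nat) :
  sum_n (fun n => c (2 * n)%nat + c (2 * n + 1)%nat) N = sum_n c (2 * N + 1).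
Proof.
  induction N as [|N IH].
  - rewrite sum_O. simpl. rewrite sum_Sn, sum_O. reflexivity.
  - rewrite sum_Sn, IH.
    replace (2 * S N + 1)%nat with (S (S (2 * N + 1))) by lia.
    replace (2 * S N)%nat with (S (2 * N + 1)) by lia.
    rewrite (sum_Sn c (S (2 * N + 1))), (sum_Sn c (2 * N + 1)).
    unfold plus; simpl. ring.
Qed.

Lemma is_series_pairs (c : nat -> R) (l : R) :
  is_series c l -> is_series (fun n => c (2 * n)%nat + c (2 * n + 1)%nat) l.
Proof.
  intros Hc. unfold is_series.
  apply (filterlim_ext (fun N => sum_n c (2 * N + 1))).
  { intros N. symmetry. apply sum_n_pairs. }
  apply (is_lim_seq_subseq (sum_n c) l (fun N => (2 * N + 1)%nat)); [|exact Hc].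
  intros P [N HN]. exists N. intros n Hn. apply HN. lia.
Qed.

Lemma pow_opp_even (y : R) (n : nat) : (- y) ^ (2 * n) = y ^ (2 * n).
Proof. rewrite !pow_mult. f_equal. ring. Qed.

Lemma pow_opp_odd (y : R) (n : nat) : (- y) ^ (2 * n + 1) = - y ^ (2 * n + 1).
Proof. rewrite !pow_add, pow_opp_even. ring. Qed.

Section EvenOddParts.

Variables (a : nat -> R) (x S T : R).
Hypothesis HS : is_series (fun m => a m * x ^ m) S.
Hypothesis HT : is_series (fun m => a m * (- x) ^ m) T.

Lemma is_series_even_part : is_series (fun n => a (2 * n)%nat * x ^ (2 * n)) ((S + T) / 2).
Proof.
  pose proof (is_series_scal_r (/ 2) _ _
                (is_series_pairs _ _ (is_series_plus _ _ _ _ HS HT))) as H.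
  refine (is_series_ext _ _ _ _ H). intros n. cbv beta.
  rewrite pow_opp_even, pow_opp_odd. unfold plus; simpl. field.
Qed.

Lemma is_series_odd_part :
  is_series (fun n => a (2 * n + 1)%nat * x ^ (2 * n + 1)) ((S - T) / 2).
Proof.
  pose proof (is_series_scal_r (/ 2) _ _
                (is_series_pairs _ _ (is_series_minus _ _ _ _ HS HT))) as H.
  refine (is_series_ext _ _ _ _ H). intros n. cbv beta.
  rewrite pow_opp_even, pow_opp_odd. unfold minus, plus, opp; simpl. field.
Qed.

End EvenOddParts.

Lemma is_series_central_oddH (x : R) :
  Rabs x < / 4 -> is_series (fun m => central_oddH m * x ^ m) (central_oddH_gf x).
Proof.
  intros Hx. rewrite <- (PSeries_central_oddH x Hx).
  apply is_pseries_R, PSeries_correct, CV_radius_inside, Rabs_lt_CV_radius_central_oddH, Hx.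
Qed.

Lemma sqrt_1_minus_16_sqr (x : R) :
  Rabs x < / 4 -> sqrt (1 - 16 * x ^ 2) = sqrt (1 - 4 * x) * sqrt (1 + 4 * x).
Proof.
  intros Hx. destruct (Rabs_def2 _ _ Hx).
  rewrite <- sqrt_mult by lra. f_equal. ring.
Qed.

Section GfParts.

Variable x : R.
Hypothesis Hx : Rabs x < / 4.

Let sqrt_1_minus_4x_gt0 : 0 < sqrt (1 - 4 * x).
Proof. destruct (Rabs_def2 _ _ Hx). apply sqrt_lt_R0. lra. Qed.

Let sqrt_1_plus_4x_gt0 : 0 < sqrt (1 + 4 * x).
Proof. destruct (Rabs_def2 _ _ Hx). apply sqrt_lt_R0. lra. Qed.

Lemma central_oddH_gf_even_part :
  (central_oddH_gf x + central_oddH_gf (- x)) / 2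
  = - (sqrt (1 + 4 * x) * ln (1 - 4 * x) + sqrt (1 - 4 * x) * ln (1 + 4 * x))
      / (4 * sqrt (1 - 16 * x ^ 2)).
Proof.
  unfold central_oddH_gf. rewrite sqrt_1_minus_16_sqr by exact Hx.
  replace (1 - 4 * - x) with (1 + 4 * x) by ring. field. lra.
Qed.

Lemma central_oddH_gf_odd_part :
  (central_oddH_gf x - central_oddH_gf (- x)) / 2
  = - (sqrt (1 + 4 * x) * ln (1 - 4 * x) - sqrt (1 - 4 * x) * ln (1 + 4 * x))
      / (4 * sqrt (1 - 16 * x ^ 2)).
Proof.
  unfold central_oddH_gf. rewrite sqrt_1_minus_16_sqr by exact Hx.
  replace (1 - 4 * - x) with (1 + 4 * x) by ring. field. lra.
Qed.

End GfParts.

Theorem theorem24 (x : R) (hx : Rabs x < / 4) :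
  is_series (fun n : nat => binomR (4 * n) (2 * n) * oddH (2 * n) * x ^ (2 * n))
    (- (sqrt (1 + 4 * x) * ln (1 - 4 * x) + sqrt (1 - 4 * x) * ln (1 + 4 * x))
       / (4 * sqrt (1 - 16 * x ^ 2)))
  /\
  is_series (fun n : nat => binomR (4 * n + 2) (2 * n + 1) * oddH (2 * n + 1)
                             * x ^ (2 * n + 1))
    (- (sqrt (1 + 4 * x) * ln (1 - 4 * x) - sqrt (1 - 4 * x) * ln (1 + 4 * x))
       / (4 * sqrt (1 - 16 * x ^ 2))).
Proof.
  pose proof (is_series_central_oddH x hx) as Hpos.
  pose proof (is_series_central_oddH (- x) ltac:(now rewrite Rabs_Ropp)) as Hneg.
  rewrite <- (central_oddH_gf_even_part x hx), <- (central_oddH_gf_odd_part x hx).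
  split.
  - refine (is_series_ext _ _ _ _ (is_series_even_part _ _ _ _ Hpos Hneg)).
    intros n. unfold central_oddH, central_binom.
    now replace (2 * (2 * n))%nat with (4 * n)%nat by lia.
  - refine (is_series_ext _ _ _ _ (is_series_odd_part _ _ _ _ Hpos Hneg)).
    intros n. unfold central_oddH, central_binom.
    now replace (2 * (2 * n + 1))%nat with (4 * n + 2)%nat by lia.
Qed.
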